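(* Let $G=(V,E)$ be a locally finite, connected, infinite graph and fix $x\in V$. Then $p''_{\mathrm{cut,E}}\le p''_{\mathrm{cut,V}}$.
   Context: Consider Bernoulli$(p)$ bond percolation on $G$ (each edge open independently with probability $p$), with law $\mathbb{P}_p$. For $K\subset V$: the outer vertex boundary is $\partial_V K=\{z\notin K:\exists y\in K,\ y\sim z\}$ and the edge boundary is $\Delta K=\{(y,z)\in E:y\in K,z\notin K\}$. Let $\mathscr{B}_E=\{\Delta S: S\text{ is the vertex set of a finite connected subgraph containing }x\}$ and $\mathscr{B}_V=\{\partial_V S: S\text{ is the vertex set of a finite connected subgraph containing }x\}$. For $\Pi\in\mathscr{B}_V$ and $v\in\Pi$, $A(x,v,\Pi)$ is the event that $x$ is connected to $v$ by an open path using no vertex of $\Pi\setminus\{v\}$; for $\Pi_E\in\mathscr{B}_E$ and $e\in\Pi_E$, $A(x,e,\Pi_E)$ is the event that $e$ is open and $x$ is connected to $e$ by an open path using no edge of $\Pi_E\setminus\{e\}$. Define $p''_{\mathrm{cut,V}}=\sup\{p\ge0:\inf_{\Pi\in\mathscr{B}_V}\sum_{v\in\Pi}\mathbb{P}_p[A(x,v,\Pi)]=0\}$ and $p''_{\mathrm{cut,E}}=\sup\{p\ge0:\inf_{\Pi_E\in\mathscr{B}_E}\sum_{e\in\Pi_E}\mathbb{P}_p[A(x,e,\Pi_E)]=0\}$. *)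

From mathcomp Require Import all_boot all_order all_algebra.
From mathcomp Require Import finmap.
From mathcomp Require Import boolp classical_sets reals.

Set Implicit Arguments.
Unset Strict Implicit.
Unset Printing Implicit Defensive.

Import Order.TTheory GRing.Theory Num.Theory.
Local Open Scope ring_scope.
Local Open Scope fset_scope.

(* A simple graph on a vertex type V is a symmetric irreflexive relation adj.
   An undirected edge {y,z} is represented by the finite set [fset y; z]. *)

Section Graph.
Variable V : choiceType.
Variable adj : rel V.

Definition locally_finite : Prop :=
  forall y : V, exists N : {fset V}, forall z, adj y z -> z \in N.

Definition graph_connected : Prop :=
  forall y z : V, exists s : seq V, path adj y s /\ last y s = z.

Definition graph_infinite : Prop :=
  forall F : {fset V}, exists y : V, y \notin F.

Definition fin_conn_containing (x : V) (S : {fset V}) : Prop :=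
  x \in S /\
  forall y z, y \in S -> z \in S ->
    exists s : seq V, [/\ path adj y s, last y s = z & all (fun u => u \in S) s].

Definition is_vboundary (S Pi : {fset V}) : Prop :=
  forall z, z \in Pi <-> (z \notin S /\ exists2 y, y \in S & adj y z).

Definition is_eboundary (S : {fset V}) (PiE : {fset {fset V}}) : Prop :=
  forall e, e \in PiE <->
    exists y z, [/\ e = [fset y; z], y \in S, z \notin S & adj y z].

Definition edges_in (W : {fset V}) : {fset {fset V}} :=
  [fset [fset a; b] | a in W, b in W & adj a b].

(* a configuration: state (open = true) of each undirected edge *)
Definition config := {fset V} -> bool.

Definition open_step (om : config) : rel V :=
  fun a b => adj a b && om [fset a; b].

Definition A_V (x v : V) (Pi : {fset V}) (om : config) : Prop :=
  exists s : seq V,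
    [/\ path (open_step om) x s, last x s = v &
        all (fun u => (u \notin Pi) || (u == v)) (x :: s)].

Fixpoint path_edges (x : V) (s : seq V) : seq {fset V} :=
  if s is y :: s' then [fset x; y] :: path_edges y s' else [::].

Definition A_E (x : V) (e : {fset V}) (PiE : {fset {fset V}}) (om : config)
  : Prop :=
  om e /\
  exists2 w, w \in e &
  exists s : seq V,
    [/\ path (open_step om) x s, last x s = w &
        all (fun f => (f \notin PiE) || (f == e)) (path_edges x s)].

End Graph.

Section Percolation.
Variable R : realType.
Variable V : choiceType.

(* Bernoulli(p) bond percolation probability of an event A which depends
   only on the states of the edges in the finite edge set F (a cylinder
   event): sum over the 2^|F| configurations on F, the other edges being
   irrelevant (set to closed). *)
Definition extend_config (F : {fset {fset V}}) (w : {ffun F -> bool})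
  : config V :=
  fun e => if insub e is Some e' then w e' else false.

Definition perc_prob (p : R) (F : {fset {fset V}}) (A : config V -> Prop) : R :=
  \sum_(w : {ffun F -> bool})
     (\prod_(e : F) (if w e then p else 1 - p)) *
     (if `[< A (extend_config w) >] then 1 else 0).
End Percolation.

Section Cut.
Variable R : realType.
Variable V : choiceType.
Variable adj : rel V.

(* { sum_{v in Pi} P_p[A(x,v,Pi)] : Pi in B_V } ; the event A(x,v,Pi)
   depends only on the edges inside S u Pi, where Pi = d_V S. *)
Definition vcut_sums (x : V) (p : R) : set R :=
  [set t | exists (S Pi : {fset V}),
     [/\ fin_conn_containing adj x S, is_vboundary adj S Pi &
         t = \sum_(v <- Pi) perc_prob p (edges_in adj (S `|` Pi)) (A_V adj x v Pi)]].

(* { sum_{e in PiE} P_p[A(x,e,PiE)] : PiE in B_E } ; the event A(x,e,PiE)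
   depends only on the edges inside S together with the edges of PiE. *)
Definition ecut_sums (x : V) (p : R) : set R :=
  [set t | exists (S : {fset V}) (PiE : {fset {fset V}}),
     [/\ fin_conn_containing adj x S, is_eboundary adj S PiE &
         t = \sum_(e <- PiE) perc_prob p (edges_in adj S `|` PiE) (A_E adj x e PiE)]].

Definition p_cut_V (x : V) : R :=
  sup [set p : R | 0 <= p <= 1 /\ inf (vcut_sums x p) = 0].

Definition p_cut_E (x : V) : R :=
  sup [set p : R | 0 <= p <= 1 /\ inf (ecut_sums x p) = 0].
End Cut.

(* Fix a finite connected S containing x, with outer vertex boundary Pi and
   edge boundary PiE.  An open path from x to v in Pi avoiding Pi \ {v} leaves
   S for the first time through an open edge {y, v} of PiE, and its part inside
   S uses no edge of PiE; so A(x,v,Pi) is contained in the union of the events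
   A(x,e,PiE) over the e in PiE containing v.  Every e in PiE has exactly one
   endpoint in Pi, hence summing over v gives
     sum_(v in Pi) P[A(x,v,Pi)] <= sum_(e in PiE) P[A(x,e,PiE)].
   Every edge sum thus dominates a vertex sum, so the vertex infimum vanishes
   whenever the edge infimum does, and the supremum defining p''_cut,E is
   taken over a subset of the one defining p''_cut,V. *)

From mathcomp Require Import all_boot all_order all_algebra.
From mathcomp Require Import finmap.
From mathcomp Require Import boolp classical_sets reals.
Set Implicit Arguments.
Unset Strict Implicit.
Unset Printing Implicit Defensive.

Import Order.TTheory GRing.Theory Num.Theory.
Local Open Scope ring_scope.
Local Open Scope fset_scope.

Section Percolation.
Variables (R : realType) (V : choiceType).
Implicit Types (p : R) (F G : {fset {fset V}}) (A : config V -> Prop).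

Definition restrict_config F (om : config V) : config V :=
  fun f => (f \in F) && om f.

Definition config_weight p F (w : {ffun F -> bool}) : R :=
  \prod_(e : F) (if w e then p else 1 - p).

Definition restrict_ffun F G (w : {ffun G -> bool}) : {ffun F -> bool} :=
  [ffun f : F => extend_config w (val f)].

Definition agrees F (u : {ffun F -> bool}) (e : {fset V}) (b : bool) : R :=
  if e \in F then (extend_config u e == b)%:R else 1.

Lemma extend_config_val F (w : {ffun F -> bool}) (e : F) :
  extend_config w (val e) = w e.
Proof. by rewrite /extend_config valK. Qed.

Lemma extend_config_notin F (w : {ffun F -> bool}) e :
  e \notin F -> extend_config w e = false.
Proof. by move=> eF; rewrite /extend_config insubF //; apply/negbTE. Qed.

Lemma restrict_extend_config F G (w : {ffun G -> bool}) :
  restrict_config F (extend_config w) = extend_config (restrict_ffun F w).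
Proof.
apply: funext => e; rewrite /restrict_config.
case eF: (e \in F); last by rewrite [RHS]extend_config_notin ?eF.
by rewrite -[e]/(val [` eF]) extend_config_val ffunE.
Qed.

Lemma prod_agrees F G (u : {ffun F -> bool}) (w : {ffun G -> bool}) :
  F `<=` G -> \prod_(e : G) agrees u (val e) (w e) = (restrict_ffun F w == u)%:R.
Proof.
move=> FG; have [<-|neq] := eqVneq.
  apply: big1 => e _; rewrite /agrees; case eF: (val e \in F) => //.
  by rewrite -[val e]/(val [` eF]) extend_config_val ffunE -extend_config_val eqxx.
have [f /negbTE uf] : exists f, restrict_ffun F w f != u f.
  apply/existsP; apply: contraR neq => /existsPn eq_wu.
  by apply/eqP/ffunP => f; apply/eqP/negPn/eq_wu.
have fG : val f \in G := fsubsetP FG _ (fsvalP f).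
rewrite (bigD1 [` fG]) //= /agrees (fsvalP f) extend_config_val.
suff -> : w [` fG] = restrict_ffun F w f by rewrite eq_sym uf mul0r.
by rewrite ffunE -[val f]/(val [` fG]) extend_config_val.
Qed.

Lemma sum_weight_agrees p F G (u : {ffun F -> bool}) : F `<=` G ->
  \sum_(w : {ffun G -> bool}) config_weight p w * \prod_(e : G) agrees u (val e) (w e)
  = config_weight p u.
Proof.
move=> FG; under eq_bigr => w _ do rewrite /config_weight -big_split /=.
rewrite -(bigA_distr_bigA (fun (e : G) b => (if b then p else 1 - p) * agrees u (val e) b)) /=.
pose q e := if e \in F then if extend_config u e then p else 1 - p else 1.
transitivity (\prod_(e : G) q (val e)).
  apply: eq_bigr => e _; rewrite big_bool /= /agrees /q.
  case: (val e \in F); last by rewrite !mulr1 addrC subrK.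
  by case: extend_config; rewrite ?mulr1 ?mulr0 ?addr0 ?add0r.
rewrite -(big_seq_fsetE _ _ predT q) -(big_fset_incl _ FG); last first.
  by move=> e _ /negbTE eF; rewrite /q eF.
by rewrite big_seq_fsetE; apply: eq_bigr => f _; rewrite /q (fsvalP f) extend_config_val.
Qed.

Lemma perc_prob_restrict p F G A : F `<=` G ->
  perc_prob p G (fun om => A (restrict_config F om)) = perc_prob p F A.
Proof.
move=> FG; rewrite /perc_prob.
pose g (u : {ffun F -> bool}) : R := if `[< A (extend_config u) >] then 1 else 0.
have g_restrict w : g (restrict_ffun F w) = \sum_u (\prod_(e : G) agrees u (val e) (w e)) * g u.
  under eq_bigr => u _ do rewrite prod_agrees //.
  rewrite (bigD1 (restrict_ffun F w)) //= eqxx mul1r big1 ?addr0 // => u neq.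
  by rewrite eq_sym (negbTE neq) mul0r.
under eq_bigr => w _ do rewrite restrict_extend_config -/(g _) g_restrict mulr_sumr.
rewrite exchange_big /=; apply: eq_bigr => u _.
under eq_bigr => w _ do rewrite mulrA.
by rewrite -mulr_suml sum_weight_agrees.
Qed.

Lemma config_weight_ge0 p F (w : {ffun F -> bool}) :
  0 <= p <= 1 -> 0 <= config_weight p w.
Proof.
by case/andP=> p0 p1; apply: prodr_ge0 => e _; case: (w e); rewrite ?subr_ge0.
Qed.

Lemma perc_prob_ge0 p F A : 0 <= p <= 1 -> 0 <= perc_prob p F A.
Proof.
move=> hp; apply: sumr_ge0 => w _; rewrite mulr_ge0 ?config_weight_ge0 //.
by case: ifP.
Qed.

Lemma perc_prob_le_sum p F A (I : {fset {fset V}}) (c : {fset V} -> R)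
    (B : {fset V} -> config V -> Prop) :
  0 <= p <= 1 -> (forall i, 0 <= c i) ->
  (forall om, A om -> exists2 i, i \in I & 1 <= c i /\ B i om) ->
  perc_prob p F A <= \sum_(i <- I) c i * perc_prob p F (B i).
Proof.
move=> hp c_ge0 AB; rewrite /perc_prob.
under [X in _ <= X]eq_bigr => i _ do rewrite mulr_sumr.
rewrite exchange_big /=; apply: ler_sum => w _.
under [X in _ <= X]eq_bigr => i _ do rewrite mulrCA.
rewrite -mulr_sumr; apply: ler_wpM2l; first exact: config_weight_ge0.
have indicator_ge0 i : 0 <= c i * (if `[< B i (extend_config w) >] then 1 else 0).
  by rewrite mulr_ge0 //; case: ifP.
case: asboolP => [/AB [i iI [ci Bi]]|_]; last exact: sumr_ge0.
rewrite (big_fsetD1 _ iI) /=; case: asboolP => // _; rewrite mulr1.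
by apply: (le_trans ci); rewrite lerDl sumr_ge0.
Qed.

End Percolation.

Section Boundaries.
Variables (V : choiceType) (adj : rel V).
Implicit Types (S Pi : {fset V}) (PiE : {fset {fset V}}) (om : config V).

Lemma locally_finite_nbhd : locally_finite adj ->
  exists N : V -> {fset V}, forall y z, adj y z -> z \in N y.
Proof. by move=> lf; exists (fun y => sval (cid (lf y))) => y; case: cid. Qed.

Lemma vboundary_exists S : locally_finite adj -> exists Pi, is_vboundary adj S Pi.
Proof.
case/locally_finite_nbhd => N adjN.
exists [fset z in (\bigcup_(y <- S) N y)%fset | (z \notin S) && has (adj^~ z) S].
move=> z; rewrite !inE /=; split.
  by case/and3P => _ zS /hasP[y yS yz]; split => //; exists y.
case=> zS [y yS yz]; rewrite zS; apply/and3P; split => //; last by apply/hasP; exists y.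
by apply/bigfcupP; exists y; rewrite ?yS ?adjN.
Qed.

Lemma eboundary_exists S : locally_finite adj -> exists PiE, is_eboundary adj S PiE.
Proof.
case/locally_finite_nbhd => N adjN.
exists [fset [fset y; z] | y in S, z in N y & (z \notin S) && adj y z] => e.
split; first by case/imfset2P => y yS [z]; rewrite !inE /= => /and3P[_ zS yz] ->; exists y, z.
case=> y [z [-> yS zS yz]]; apply/imfset2P; exists y => //; exists z => //.
by rewrite !inE /= adjN ?zS.
Qed.

Lemma edges_inP W f :
  reflect (exists a b, [/\ f = [fset a; b], a \in W, b \in W & adj a b])
          (f \in edges_in adj W).
Proof.
apply: (iffP (imfset2P _ _ _ _ _)).
  by case=> a aW [b]; rewrite !inE /= => /andP[bW ab] ->; exists a, b.
by case=> a [b [-> aW bW ab]]; exists a => //; exists b; rewrite // !inE /= bW.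
Qed.

Lemma edges_in_eboundary_sub S Pi PiE :
  is_vboundary adj S Pi -> is_eboundary adj S PiE ->
  edges_in adj S `|` PiE `<=` edges_in adj (S `|` Pi).
Proof.
move=> SPi SPiE; apply/fsubsetP => f; rewrite inE; case/orP.
  by case/edges_inP => a [b [-> aS bS ab]]; apply/edges_inP; exists a, b; rewrite !inE aS bS.
case/SPiE => y [z [-> yS zS yz]]; apply/edges_inP; exists y, z.
by rewrite !inE yS; split=> //; apply/orP; right; apply/SPi; split => //; exists y.
Qed.

Lemma eboundary_edge_count (R : nzSemiRingType) S Pi PiE e :
  is_vboundary adj S Pi -> is_eboundary adj S PiE -> e \in PiE ->
  \sum_(v <- Pi) (v \in e)%:R = 1 :> R.
Proof.
move=> SPi SPiE /SPiE [y [z [-> yS zS yz]]].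
have zPi : z \in Pi by apply/SPi; split => //; exists y.
rewrite (big_fsetD1 _ zPi) big1_fset /=; first by rewrite addr0 !inE eqxx orbT.
move=> v; rewrite !inE => /andP[vz /SPi[vS _]] _.
by rewrite (negbTE vz) orbF; case: eqP vS => // ->; rewrite yS.
Qed.

Lemma open_path_exits_vboundary S Pi om v a s :
  is_vboundary adj S Pi -> v \in Pi -> a \in S ->
  path (open_step adj om) a s -> last a s = v ->
  all (fun u => (u \notin Pi) || (u == v)) s ->
  exists y, exists2 s1,
    [/\ y \in S, open_step adj om y v, path (open_step adj om) a s1 & last a s1 = y]
    & all (mem S) s1.
Proof.
move=> SPi vPi; elim: s a => [|b s IHs] a aS /=.
  by move=> _ av; have [] := (SPi v).1 vPi; rewrite -av aS.
case/andP=> ab bs lbs /andP[bPi avoid].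
have [bv|bv] := eqVneq b v; first by exists a, [::]; rewrite -?bv.
have bS : b \in S.
  apply: contraT => bS; move: bPi; rewrite (negbTE bv) orbF => /negP[].
  by apply/SPi; split => //; exists a => //; case/andP: ab.
have [y [s1 [yS yv as1 ls1] s1S]] := IHs b bS bs lbs avoid.
by exists y, (b :: s1); rewrite /= ?ab ?bS.
Qed.

Lemma inner_path_avoids_eboundary S PiE om e a s :
  is_eboundary adj S PiE -> a \in S -> all (mem S) s ->
  path (open_step adj om) a s ->
  path (open_step adj (restrict_config (edges_in adj S `|` PiE) om)) a s /\
  all (fun f => (f \notin PiE) || (f == e)) (path_edges a s).
Proof.
move=> SPiE; elim: s a => [|b s IHs] a aS //= /andP[bS sS] /andP[/andP[ab oab] bs].
have [IH1 IH2] := IHs b bS sS bs.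
have abS : [fset a; b] \in edges_in adj S by apply/edges_inP; exists a, b.
have abPiE : [fset a; b] \notin PiE.
  apply/negP => /SPiE [y [z [Eab yS zS _]]].
  have : z \in [fset a; b] by rewrite Eab !inE eqxx orbT.
  by rewrite !inE => /orP[] /eqP zE; rewrite zE ?aS ?bS in zS.
by rewrite IH1 IH2 abPiE /open_step ab /restrict_config inE abS oab.
Qed.

End Boundaries.

Section Cut.
Variables (R : realType) (V : choiceType) (adj : rel V).
Implicit Types (p : R) (x : V) (S Pi : {fset V}) (PiE : {fset {fset V}}).

Lemma A_V_le_sum_A_E p x S Pi PiE v :
  0 <= p <= 1 -> x \in S -> is_vboundary adj S Pi -> is_eboundary adj S PiE ->
  v \in Pi ->
  perc_prob p (edges_in adj (S `|` Pi)) (A_V adj x v Pi) <=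
  \sum_(e <- PiE) (v \in e)%:R * perc_prob p (edges_in adj S `|` PiE) (A_E adj x e PiE).
Proof.
move=> hp xS SPi SPiE vPi.
under eq_bigr => e _ do
  rewrite -(perc_prob_restrict _ (A_E adj x e PiE) (edges_in_eboundary_sub SPi SPiE)).
apply: perc_prob_le_sum => // om [s [xs xv /andP[_ avoid]]].
have [y [s1 [yS yv xs1 ls1] s1S]] := open_path_exits_vboundary SPi vPi xS xs xv avoid.
have yvPiE : [fset y; v] \in PiE.
  by apply/SPiE; exists y, v; split => //; [case/SPi: vPi | case/andP: yv].
have [xs1' s1_avoid] := inner_path_avoids_eboundary [fset y; v] SPiE xS s1S xs1.
exists [fset y; v] => //; split; first by rewrite !inE eqxx orbT.
split; first by rewrite /restrict_config inE yvPiE orbT; case/andP: yv.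
by exists y; [rewrite !inE eqxx | exists s1].
Qed.

Lemma vcut_sum_le_ecut_sum p x S Pi PiE :
  0 <= p <= 1 -> x \in S -> is_vboundary adj S Pi -> is_eboundary adj S PiE ->
  \sum_(v <- Pi) perc_prob p (edges_in adj (S `|` Pi)) (A_V adj x v Pi) <=
  \sum_(e <- PiE) perc_prob p (edges_in adj S `|` PiE) (A_E adj x e PiE).
Proof.
move=> hp xS SPi SPiE.
rewrite big_seq (le_trans (ler_sum _ (fun v vPi => A_V_le_sum_A_E hp xS SPi SPiE vPi))) //.
rewrite -big_seq exchange_big /= [leRHS]big_seq big_seq; apply: ler_sum => e ePiE.
by rewrite -mulr_suml (eboundary_edge_count _ SPi SPiE ePiE) mul1r.
Qed.

Lemma ecut_sums_neq0 x p : locally_finite adj -> (ecut_sums adj x p !=set0)%classic.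
Proof.
move=> lf; have [PiE xPiE] := eboundary_exists [fset x] lf.
eexists; exists [fset x], PiE; split; last reflexivity; last exact: xPiE.
by split=> [|y z]; rewrite ?inE // => /eqP-> /eqP->; exists [::].
Qed.

Lemma vcut_sums_ge0 x p : 0 <= p <= 1 -> lbound (vcut_sums adj x p) 0.
Proof. by move=> hp _ [S [Pi [_ _ ->]]]; apply: sumr_ge0 => v _; exact: perc_prob_ge0. Qed.

Lemma ecut_sums_dominated x p : 0 <= p <= 1 -> locally_finite adj ->
  forall t, ecut_sums adj x p t -> exists2 t', vcut_sums adj x p t' & t' <= t.
Proof.
move=> hp lf _ [S [PiE [SxS SPiE ->]]]; have [Pi SPi] := vboundary_exists S lf.
by eexists; [exists S, Pi | exact: vcut_sum_le_ecut_sum hp SxS.1 SPi SPiE].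
Qed.

End Cut.

Section InfSup.
Variable R : realType.
Implicit Types A B : set R.
Local Open Scope classical_set_scope.

Lemma inf_eq0_dominated A B : A !=set0 -> lbound B 0 ->
  (forall a, A a -> exists2 b, B b & b <= a) -> inf A = 0 -> inf B = 0.
Proof.
move=> [a Aa] B_ge0 AB infA0; have [b Bb _] := AB a Aa.
have infB_ge0 : 0 <= inf B by apply: lb_le_inf => //; exists b.
apply/eqP; rewrite eq_le infB_ge0 andbT -infA0.
apply: lb_le_inf => [|a' /AB [b' Bb' ba']]; first by exists a.
by apply: le_trans ba'; apply: ge_inf => //; exists 0.
Qed.

Lemma le_sup_subset_ge0 A B : A `<=` B -> has_ubound B -> lbound B 0 ->
  sup A <= sup B.
Proof.
move=> AB ubB B_ge0.
have [->|/set0P[a Aa]] := eqVneq A set0.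
  rewrite sup0; have [->|/set0P[b Bb]] := eqVneq B set0; first by rewrite sup0.
  exact: le_trans (B_ge0 _ Bb) (ub_le_sup ubB Bb).
apply: sup_le; first by move=> y /AB; apply: le_down.
  by exists a.
by split=> //; exists a; apply: AB.
Qed.

End InfSup.

Theorem lemma2p10 (R : realType) (V : choiceType) (adj : rel V)
  (adj_sym : symmetric adj) (adj_irr : irreflexive adj)
  (lf : locally_finite adj) (conn : graph_connected adj)
  (inf_G : graph_infinite V) (x : V) :
  p_cut_E R adj x <= p_cut_V R adj x.
Proof.
apply: le_sup_subset_ge0 => [p [hp infE0]|| p [/andP[p_ge0 _] _] //].
  split=> //; apply: inf_eq0_dominated infE0.
  - exact: ecut_sums_neq0.
  - exact: vcut_sums_ge0.
  - exact: ecut_sums_dominated.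
by exists 1 => p [/andP[_ ->]].
Qed.
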